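(* Let $Z_1,\dots,Z_k$ be independent continuous random variables, each symmetric about $0$ (with mean $0$), and let $Y=\max(Z_1,\dots,Z_k)$ with probability density function $f_Y$. Then for every $x\ge 0$, $f_Y(x)\ge f_Y(-x)$. *)

From HB Require Import structures.
From mathcomp Require Import all_boot all_order all_algebra.
From mathcomp Require Import all_classical all_reals all_analysis.
Set Implicit Arguments.
Unset Strict Implicit.
Unset Printing Implicit Defensive.
Import Order.TTheory GRing.Theory Num.Theory.
Local Open Scope classical_set_scope.
Local Open Scope ring_scope.

Section defs.
Context (d : measure_display) (T : measurableType d) (R : realType)
  (P : probability T R).

Definition independent_RVs (k : nat) (Z : 'I_k -> T -> R) : Prop :=
  forall B : 'I_k -> set R, (forall i, measurable (B i)) ->
    P (\bigcap_(i in [set: 'I_k]) (Z i @^-1` B i)) =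
    (\prod_(i < k) P (Z i @^-1` B i))%E.

Definition has_density (X : T -> R) (f : R -> R) : Prop :=
  [/\ measurable_fun setT f, (forall x, 0 <= f x) &
      forall B : set R, measurable B ->
        P (X @^-1` B) = (\int[lebesgue_measure]_(x in B) (f x)%:E)%E].

Definition symmetric_about0 (X : T -> R) : Prop :=
  forall B : set R, measurable B ->
    P (X @^-1` B) = P ((fun w => - X w) @^-1` B).

Definition mean_zero (X : T -> R) : Prop :=
  P.-integrable setT (EFin \o X) /\ ('E_P[X] = 0)%E.

Definition is_max_of (k : nat) (Z : 'I_k -> T -> R) (Y : T -> R) : Prop :=
  forall w, (forall i, Z i w <= Y w) /\ exists i, Y w = Z i w.

End defs.

From HB Require Import structures.
From mathcomp Require Import all_boot all_order all_algebra.
From mathcomp Require Import all_classical all_reals all_analysis.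
From mathcomp Require Import measurable_realfun lra.
Set Implicit Arguments.
Unset Strict Implicit.
Unset Printing Implicit Defensive.
Import Order.TTheory GRing.Theory Num.Theory.
Local Open Scope classical_set_scope.
Local Open Scope ring_scope.
Import numFieldNormedType.Exports.

(* Let F_i be the cdf of Z_i. Independence gives F_Y = prod_i F_i, and
   symmetry of the atomless Z_i gives F_i(-t) = 1 - F_i(t). For 0 < r <= x
   this turns P(Y in B(-x, r)) and P(Y in B(x, r)) into
     prod_i (1 - F_i(x-r)) - prod_i (1 - F_i(x+r))  and
     prod_i F_i(x+r) - prod_i F_i(x-r),
   and the first is at most the second because
   t |-> prod_i t_i + prod_i (1 - t_i) is coordinatewise nondecreasing on
   [1/2, 1]^k, where F_i(x-r) lies. These probabilities are the integrals of
   f_Y over the balls, so comparing averages over shrinking balls at points x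
   such that x and -x are both Lebesgue points of f_Y (almost every x) gives
   f_Y(-x) <= f_Y(x). *)

Lemma prod_1B_sub_le_prod_sub (R : realDomainType) (I : Type) (s : seq I)
    (u v : I -> R) :
  (forall i, 1 - v i <= v i) -> (forall i, v i <= u i <= 1) ->
  \prod_(i <- s) (1 - v i) - \prod_(i <- s) (1 - u i) <=
  \prod_(i <- s) u i - \prod_(i <- s) v i.
Proof.
move=> v_half uv; elim: s => [|i s IH]; first by rewrite !big_nil !subrr.
have le_compl : \prod_(j <- s) (1 - u j) <= \prod_(j <- s) (1 - v j).
  by apply: ler_prod => j _; have /andP[] := uv j; lra.
have le_v : \prod_(j <- s) (1 - u j) <= \prod_(j <- s) v j.
  by apply: ler_prod => j _; have := v_half j; have /andP[] := uv j; lra.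
have ge0_compl : 0 <= \prod_(j <- s) (1 - u j).
  by apply: prodr_ge0 => j _; have /andP[] := uv j; lra.
rewrite !big_cons; have := v_half i; have /andP[] := uv i.
move: IH le_compl le_v ge0_compl.
set A := \prod_(j <- s) (1 - v j); set B := \prod_(j <- s) (1 - u j).
set U := \prod_(j <- s) u j; set V := \prod_(j <- s) v j.
move=> IH BA BV B0 vu u1 vi.
(* (1 - v i) A - (1 - u i) B = (1 - v i) (A - B) + B (u i - v i)
   <= u i (U - V) + V (u i - v i) = u i U - v i V *)
nra.
Qed.

Section real_probability.
Context d (T : measurableType d) (R : realType) (P : probability T R).

Definition pr (A : set T) : R := fine (P A).

Lemma prE A : measurable A -> P A = (pr A)%:E.
Proof. by move=> mA; rewrite /pr fineK// fin_num_measure. Qed.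

Lemma pr_setC A : measurable A -> pr (~` A) = 1 - pr A.
Proof. by move=> mA; rewrite /pr probability_setC// prE. Qed.

Lemma pr_setU A B : measurable A -> measurable B -> A `&` B = set0 ->
  pr (A `|` B) = pr A + pr B.
Proof.
move=> mA mB AB; apply: EFin_inj.
by rewrite EFinD -!prE ?measureU//; exact: measurableU.
Qed.

Lemma le_pr A B : measurable A -> measurable B -> A `<=` B -> pr A <= pr B.
Proof. by move=> mA mB AB; rewrite -lee_fin -!prE// le_measure// inE. Qed.

Lemma pr_le1 A : measurable A -> pr A <= 1.
Proof. by move=> mA; rewrite -lee_fin -prE// probability_le1. Qed.

Definition cdfR (X : T -> R) (y : R) : R := pr (X @^-1` `]-oo, y]).

Section cdfR_properties.
Variable X : {RV P >-> R}.

Let mX B : measurable B -> measurable (X @^-1` B).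
Proof. exact: measurable_funPTI. Qed.

Lemma le_cdfR : {homo cdfR X : a b / a <= b}.
Proof.
move=> a b ab; apply: le_pr; try exact: mX.
by move=> w /=; rewrite !in_itv/= => /le_trans; apply.
Qed.

Lemma cdfR_le1 y : cdfR X y <= 1.
Proof. exact/pr_le1/mX. Qed.

Lemma pr_preimage_itvoy y : pr (X @^-1` `]y, +oo[) = 1 - cdfR X y.
Proof. by rewrite -setCitvl -preimage_setC pr_setC//; exact: mX. Qed.

Hypothesis X_atomless : forall y, P (X @^-1` [set y]) = 0%E.

Lemma pr_preimage_itvNyo y : pr (X @^-1` `]-oo, y[) = cdfR X y.
Proof.
rewrite /cdfR -(setUitv1 true)// preimage_setU pr_setU; try exact: mX.
- by rewrite /pr X_atomless addr0.
- rewrite -preimage_setI; apply/seteqP; split=> w //= [].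
  by rewrite in_itv/= => + Xy; rewrite Xy ltxx.
Qed.

Lemma pr_preimage_ball (z r : R) : 0 < r ->
  pr (X @^-1` ball z r) = cdfR X (z + r) - cdfR X (z - r).
Proof.
move=> r0; rewrite -pr_preimage_itvNyo ball_itv.
have -> : `]-oo, z + r[%classic = `]-oo, z - r] `|` `]z - r, z + r[ :> set R.
  by rewrite -itv_bndbnd_setU// bnd_simp; lra.
rewrite preimage_setU pr_setU; try exact: mX; first by rewrite /cdfR; lra.
rewrite -preimage_setI; apply/seteqP; split=> w //= [].
by rewrite !in_itv/= => + /andP[]; lra.
Qed.

Hypothesis X_sym : symmetric_about0 P X.

Lemma cdfRN y : cdfR X (- y) = 1 - cdfR X y.
Proof.
rewrite -pr_preimage_itvNyo -pr_preimage_itvoy /pr [in RHS]X_sym//.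
congr (fine (P _)).
by apply/seteqP; split=> w /=; rewrite !in_itv/= ?andbT; lra.
Qed.

End cdfR_properties.

Lemma has_density_atomless (X : T -> R) f : has_density P X f ->
  forall y, P (X @^-1` [set y]) = 0%E.
Proof. by case=> _ _ hX y; rewrite hX ?integral_set1. Qed.

Lemma has_density_locally_integrable (X : T -> R) f :
  has_density P X f -> locally_integrable setT f.
Proof.
case=> mf f0 Xf; apply: open_integrable_locally; first exact: openT.
apply/integrableP; split; first exact/measurable_EFinP.
under eq_integral do rewrite /= ger0_norm//.
by rewrite -Xf// preimage_setT probability_setT ltry.
Qed.

Lemma cdfR_max k (Z : 'I_k -> {RV P >-> R}) (Y : T -> R) :
  independent_RVs P (fun i => Z i : T -> R) ->
  is_max_of (fun i => Z i : T -> R) Y ->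
  forall y, cdfR Y y = \prod_(i < k) cdfR (Z i) y.
Proof.
move=> indep Ymax y; rewrite /cdfR.
have -> : Y @^-1` `]-oo, y] = \bigcap_(i in [set: 'I_k]) (Z i @^-1` `]-oo, y]).
  apply/seteqP; split => w /=; rewrite ?in_itv/=.
  - by move=> Yy i _; rewrite /= in_itv/=; exact: le_trans ((Ymax w).1 i) Yy.
  - by move=> Zy; have [_ [i ->]] := Ymax w; exact: (Zy i).
rewrite /pr indep; last by move=> i; exact: measurable_itv.
rewrite (eq_bigr (fun i => (pr (Z i @^-1` `]-oo, y]))%:E)) ?prodEFin//.
by move=> i _; rewrite -prE//; exact: measurable_funPTI.
Qed.

Lemma pr_ballN_le_ball k (Z : 'I_k -> {RV P >-> R}) (Y : {RV P >-> R})
    (x r : R) :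
  (forall i y, P (Z i @^-1` [set y]) = 0%E) ->
  (forall i, symmetric_about0 P (Z i)) ->
  (forall y, P (Y @^-1` [set y]) = 0%E) ->
  (forall y, cdfR Y y = \prod_(i < k) cdfR (Z i) y) ->
  0 < r <= x -> pr (Y @^-1` ball (- x) r) <= pr (Y @^-1` ball x r).
Proof.
move=> Z_atomless Z_sym Y_atomless cdfY /andP[r0 rx].
rewrite !pr_preimage_ball// !cdfY.
have -> : - x + r = - (x - r) by lra.
have -> : - x - r = - (x + r) by lra.
under eq_bigr do rewrite cdfRN//.
under [X in _ - X <= _]eq_bigr do rewrite cdfRN//.
apply: prod_1B_sub_le_prod_sub => i.
- have /(le_cdfR (Z i)) : - (x - r) <= x - r by lra.
  by rewrite cdfRN//; lra.
- by rewrite le_cdfR ?cdfR_le1//; lra.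
Qed.

End real_probability.

Section lebesgue_points.
Context (R : realType).
Local Notation mu := (@lebesgue_measure R).

Lemma nicely_shrinking_ball (x : R) :
  nicely_shrinking x (fun n => ball x (harmonic n)).
Proof.
split=> [n|]; first exact: measurable_ball.
exists (1, fun n => (n.+1%:R^-1)%:pos); split=> //=.
- exact: cvg_harmonic.
- by move=> n.
- by move=> n; rewrite (_ : 1%:E = 1%E)// mul1e.
Qed.

Lemma lebesgue_pt_ball_integral_le (f : R -> R) (x y : R) :
  locally_integrable setT f -> lebesgue_pt f x -> lebesgue_pt f y ->
  (\forall r \near 0^'+, \int[mu]_(z in ball y r) (f z)%:E <=
                         \int[mu]_(z in ball x r) (f z)%:E)%E ->
  f y <= f x.
Proof.
move=> locf fx fy near_le.
have cvg_avg z :=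
  nice_lebesgue_differentiation nicely_shrinking_ball locf (x:=z).
rewrite -lee_fin; apply: lee_cvg_to (cvg_avg _ fy) (cvg_avg _ fx) _.
have le_near : \forall n \near \oo, _ := cvg_harmonic near_le.
apply: filterS le_near => n /(_ (harmonic_gt0 n)) le_int.
rewrite !(lebesgue_measure_ball _ (harmonic_ge0 n)); apply: lee_wpmul2l => //.
by rewrite inve_ge0 lee_fin; apply: mulrn_wge0; exact: harmonic_ge0.
Qed.

Lemma ae_oppr (Q : R -> Prop) :
  {ae mu, forall x, Q x} -> {ae mu, forall x, Q (- x)}.
Proof.
case=> N [mN N0 QN]; exists (-%R @^-1` N); split => //.
- by rewrite -[X in measurable X]setTI; exact: measurable_funN.
- by move: (lebesgue_measureN mN); rewrite /pushforward => ->.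
- by move=> x /= nQx; apply: QN.
Qed.

End lebesgue_points.

Theorem lemma25 (d : measure_display) (T : measurableType d) (R : realType)
  (P : probability T R) (k : nat) (Z : 'I_k -> {RV P >-> R}) (Y : {RV P >-> R})
  (fY : R -> R) :
  independent_RVs P (fun i => Z i : T -> R) ->
  (forall i, exists f : R -> R, has_density P (Z i) f) ->
  (forall i, symmetric_about0 P (Z i)) ->
  (forall i, mean_zero P (Z i)) ->
  is_max_of (fun i => Z i : T -> R) Y ->
  has_density P Y fY ->
  {ae (@lebesgue_measure R), forall x : R, 0 <= x -> fY (- x) <= fY x}.
Proof.
move=> indep Z_density Z_sym _ Y_max Y_density.
have Z_atomless i : forall y, P (Z i @^-1` [set y]) = 0%E.
  by have [f /has_density_atomless] := Z_density i.
have Y_atomless := has_density_atomless Y_density.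
have fY_loc := has_density_locally_integrable Y_density.
have [_ _ prY] := Y_density.
have ae_pt := lebesgue_differentiation fY_loc.
apply: (filterS2 (ae_filter_ringOfSetsType _) _ ae_pt (ae_oppr ae_pt)).
move=> x fYx fYNx.
rewrite le_eqVlt => /predU1P[<-|x_gt0]; first by rewrite oppr0.
apply: lebesgue_pt_ball_integral_le => //; near=> r.
have r_gt0 : 0 < r by near: r; exact: nbhs_right_gt.
have r_le_x : r <= x by near: r; exact: nbhs_right_le.
have mY (B : set R) : measurable B -> measurable (Y @^-1` B).
  exact: measurable_funPTI.
rewrite -!prY; try exact: measurable_ball.
rewrite !(prE P (mY _ (measurable_ball _ _))) lee_fin.
apply: pr_ballN_le_ball Z_atomless Z_sym Y_atomless (cdfR_max indep Y_max) _.
by rewrite r_gt0 r_le_x.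
Unshelve. all: by end_near.
Qed.
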